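(* Let $\mathcal Q,\mathcal R$ be polynomials in three complex variables. Then $$\mathcal Q(\Lambda^3,\Lambda^7_{1,1},M^8)+\Lambda^5_1\,\mathcal R(\Lambda^3,\Lambda^7_{1,1},M^8)\Big|_{f_1'=0}\equiv0$$ holds identically in $\mathbb C[f_2',f_1'',f_2'',f_1''',f_2''',f_1'''',f_2'''']$ if and only if $\mathcal Q$ and $\mathcal R$ are both identically zero.
   Context: $f_i^{(\lambda)}$ ($i\in\{1,2\}$, $\lambda\ge1$) are independent indeterminates; $\Delta^{\alpha,\beta}:=f_1^{(\alpha)}f_2^{(\beta)}-f_1^{(\beta)}f_2^{(\alpha)}$. $\Lambda^3:=\Delta^{1,2}$; $\Lambda^5_1:=\Delta^{1,3}f_1'-3\Delta^{1,2}f_1''$; $\Lambda^7_{1,1}:=(\Delta^{1,4}+4\Delta^{2,3})(f_1')^2-10\Delta^{1,3}f_1'f_1''+15\Delta^{1,2}(f_1'')^2$; $M^8:=3\Delta^{1,4}\Delta^{1,2}+12\Delta^{2,3}\Delta^{1,2}-5(\Delta^{1,3})^2$. ''$|_{f_1'=0}$'' means substituting $f_1'=0$. *)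

From HB Require Import structures.
From mathcomp Require Import all_boot all_order all_algebra.
Set Implicit Arguments. Unset Strict Implicit. Unset Printing Implicit Defensive.
Import Order.TTheory GRing.Theory Num.Theory.
Local Open Scope ring_scope.

(* Jet expressions, defined generically over a commutative ring R;
   f1 n, f2 n stand for f_1^(n), f_2^(n). *)
Section Jets.
Variable R : comNzRingType.
Variables f1 f2 : nat -> R.

Definition Delta (a b : nat) : R := f1 a * f2 b - f1 b * f2 a.
Definition Lambda3 : R := Delta 1 2.
Definition Lambda5_1 : R := Delta 1 3 * f1 1 - 3%:R * Delta 1 2 * f1 2.
Definition Lambda7_11 : R :=
  (Delta 1 4 + 4%:R * Delta 2 3) * f1 1 ^+ 2 - 10%:R * Delta 1 3 * f1 1 * f1 2
  + 15%:R * Delta 1 2 * f1 2 ^+ 2.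
Definition M8 : R :=
  3%:R * Delta 1 4 * Delta 1 2 + 12%:R * Delta 2 3 * Delta 1 2 - 5%:R * Delta 1 3 ^+ 2.
End Jets.

(* Polynomials in three variables over F: {poly {poly {poly F}}}, the outermost
   variable being the first one.  eval3 c Q x y z = Q(x,y,z) in a commutative
   ring S, with coefficients mapped into S via c. *)
Definition eval3 (F : comNzRingType) (S : comNzRingType) (c : F -> S)
  (Q : {poly {poly {poly F}}}) (x y z : S) : S :=
  (map_poly (fun q : {poly {poly F}} =>
     (map_poly (fun r : {poly F} => (map_poly c r).[z]) q).[y]) Q).[x].

Definition P7 (F : comNzRingType) :=
  {poly {poly {poly {poly {poly {poly {poly F}}}}}}}.

Definition cst7 (F : comNzRingType) (a : F) : P7 F :=
  a%:P%:P%:P%:P%:P%:P%:P.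

Definition X1 (F : comNzRingType) : P7 F := 'X.
Definition X2 (F : comNzRingType) : P7 F := ('X)%:P.
Definition X3 (F : comNzRingType) : P7 F := ('X)%:P%:P.
Definition X4 (F : comNzRingType) : P7 F := ('X)%:P%:P%:P.
Definition X5 (F : comNzRingType) : P7 F := ('X)%:P%:P%:P%:P.
Definition X6 (F : comNzRingType) : P7 F := ('X)%:P%:P%:P%:P%:P.
Definition X7 (F : comNzRingType) : P7 F := ('X)%:P%:P%:P%:P%:P%:P.

(* The jets after the substitution f_1' = 0:
   f1' = 0, f1'' = X2, f1''' = X4, f1'''' = X6;
   f2' = X1, f2'' = X3, f2''' = X5, f2'''' = X7.
   (Orders other than 1..4 never occur in the expressions.) *)
Definition f1sub (F : comNzRingType) (n : nat) : P7 F :=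
  match n with 2 => X2 F | 3 => X4 F | 4 => X6 F | _ => 0 end.
Definition f2sub (F : comNzRingType) (n : nat) : P7 F :=
  match n with 1 => X1 F | 2 => X3 F | 3 => X5 F | 4 => X7 F | _ => 0 end.

Definition combo (F : comNzRingType) (Q R : {poly {poly {poly F}}}) : P7 F :=
  let f1 := f1sub F in let f2 := f2sub F in
  eval3 (@cst7 F) Q (Lambda3 f1 f2) (Lambda7_11 f1 f2) (M8 f1 f2)
  + Lambda5_1 f1 f2 * eval3 (@cst7 F) R (Lambda3 f1 f2) (Lambda7_11 f1 f2) (M8 f1 f2).

From HB Require Import structures.
From mathcomp Require Import all_boot all_order all_algebra ring.
Import GRing.Theory Num.Theory.
Local Open Scope ring_scope.

(* For "->":
   1. Every expression in the invariants commutes with ring morphisms, so the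
      identity combo Q R = 0, which lives in the seven-fold polynomial ring,
      survives evaluation at any point of F^7.  The polynomial ring is viewed
      as the last stage of a tower F, F[X], F[X][X], ..., on which evaluation
      at a point is a ring morphism, defined by recursion on the height.
   2. At a point where f1''' = f2'' = f2''' = 0 (and f1' = 0 as always), with
      a = f1'', b = f1'''', p = f2', the invariants take the values
        L3 = -ap,  L5 = 3a^2 p,  L7 = -15a^3 p,  M8 = 3abp^2.
      Negating (a, b, p) fixes L3, L7, M8 and negates L5; adding and subtracting
      the two identities gives Q = 0 and R = 0 at (L3, L7, M8), as a, p != 0.
   3. Over an algebraically closed field every (x, y, z) with x, y != 0 is of
      the form (L3, L7, M8), and a polynomial vanishing off the coordinate
      hyperplanes x = 0, y = 0 in characteristic 0 is zero. *)

Lemma eval3_ext {F S : comNzRingType} {c c' : F -> S} Q x y z :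
  c =1 c' -> eval3 c Q x y z = eval3 c' Q x y z.
Proof.
move=> ecc'; rewrite /eval3; congr horner; apply: eq_map_poly => q.
by congr horner; apply: eq_map_poly => r; rewrite (eq_map_poly ecc').
Qed.

Lemma eval3_rmorph (F S T : comNzRingType) (c : F -> S) (phi : {rmorphism S -> T})
    Q x y z :
  phi (eval3 c Q x y z) = eval3 (phi \o c) Q (phi x) (phi y) (phi z).
Proof.
rewrite /eval3 -horner_map -map_poly_comp; congr horner; apply: eq_map_poly => q /=.
rewrite -horner_map -map_poly_comp; congr horner; apply: eq_map_poly => r /=.
by rewrite -horner_map -map_poly_comp.
Qed.

Lemma eval3_zero (F S : comNzRingType) (c : F -> S) x y z : eval3 c 0 x y z = 0.
Proof. by rewrite /eval3 map_poly0 horner0. Qed.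

Definition jet_combo (F S : comNzRingType) (c : F -> S) (Q R : {poly {poly {poly F}}})
    (f1 f2 : nat -> S) : S :=
  eval3 c Q (Lambda3 f1 f2) (Lambda7_11 f1 f2) (M8 f1 f2)
  + Lambda5_1 f1 f2 * eval3 c R (Lambda3 f1 f2) (Lambda7_11 f1 f2) (M8 f1 f2).
Arguments jet_combo {F S}.

Lemma jet_combo0 (F S : comNzRingType) (c : F -> S) f1 f2 : jet_combo c 0 0 f1 f2 = 0.
Proof. by rewrite /jet_combo !eval3_zero mulr0 addr0. Qed.

Lemma jet_combo_ext (F S : comNzRingType) (c c' : F -> S) (f1 f1' f2 f2' : nat -> S) Q R :
  c =1 c' ->
  [/\ f1 1 = f1' 1, f1 2 = f1' 2, f1 3 = f1' 3 & f1 4 = f1' 4] ->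
  [/\ f2 1 = f2' 1, f2 2 = f2' 2, f2 3 = f2' 3 & f2 4 = f2' 4] ->
  jet_combo c Q R f1 f2 = jet_combo c' Q R f1' f2'.
Proof.
move=> ec [e11 e12 e13 e14] [e21 e22 e23 e24].
rewrite /jet_combo /Lambda3 /Lambda5_1 /Lambda7_11 /M8 /Delta.
by rewrite e11 e12 e13 e14 e21 e22 e23 e24 !(eval3_ext _ _ _ _ ec).
Qed.

(* The invariants are polynomial in the jets with integer coefficients, hence
   commute with ring morphisms. *)
Section JetMorphism.
Variables (S T : comNzRingType) (phi : {rmorphism S -> T}) (f1 f2 : nat -> S).

Lemma Delta_rmorph a b : phi (Delta f1 f2 a b) = Delta (phi \o f1) (phi \o f2) a b.
Proof. by rewrite /Delta rmorphB !rmorphM. Qed.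

Lemma Lambda3_rmorph : phi (Lambda3 f1 f2) = Lambda3 (phi \o f1) (phi \o f2).
Proof. exact: Delta_rmorph. Qed.

Lemma Lambda5_1_rmorph : phi (Lambda5_1 f1 f2) = Lambda5_1 (phi \o f1) (phi \o f2).
Proof. by rewrite /Lambda5_1 !(rmorph_nat, rmorphD, rmorphN, rmorphM, Delta_rmorph). Qed.

Lemma Lambda7_11_rmorph : phi (Lambda7_11 f1 f2) = Lambda7_11 (phi \o f1) (phi \o f2).
Proof.
by rewrite /Lambda7_11 !(rmorph_nat, rmorphXn, rmorphD, rmorphN, rmorphM, Delta_rmorph).
Qed.

Lemma M8_rmorph : phi (M8 f1 f2) = M8 (phi \o f1) (phi \o f2).
Proof. by rewrite /M8 !(rmorph_nat, rmorphXn, rmorphD, rmorphN, rmorphM, Delta_rmorph). Qed.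

Lemma jet_combo_rmorph (F : comNzRingType) (c : F -> S) Q R :
  phi (jet_combo c Q R f1 f2) = jet_combo (phi \o c) Q R (phi \o f1) (phi \o f2).
Proof.
by rewrite /jet_combo rmorphD rmorphM !eval3_rmorph Lambda3_rmorph Lambda5_1_rmorph
  Lambda7_11_rmorph M8_rmorph.
Qed.

End JetMorphism.

(* Reduced jets: f1' = f1''' = f2'' = f2''' = 0, with a = f1'', b = f1'''',
   p = f2'.  reduced_eval P a b p is P evaluated at the values of (L3, L7, M8)
   on such a jet, and reduced_combo is the value of the whole combination. *)
Section ReducedJets.
Variables (F S : comNzRingType) (c : F -> S).

Definition reduced_eval (P : {poly {poly {poly F}}}) (a b p : S) : S :=
  eval3 c P (- (a * p)) (- (15%:R * a ^+ 3 * p)) (3%:R * a * b * p ^+ 2).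

Definition reduced_combo (Q R : {poly {poly {poly F}}}) (a b p : S) : S :=
  reduced_eval Q a b p + 3%:R * a ^+ 2 * p * reduced_eval R a b p.

(* L3, L7 and M8 are even in the jet. *)
Lemma reduced_eval_opp P a b p : reduced_eval P (- a) (- b) (- p) = reduced_eval P a b p.
Proof. by rewrite /reduced_eval; congr eval3; ring. Qed.

Variables (f1 f2 : nat -> S).
Hypotheses (f1_1 : f1 1 = 0) (f1_3 : f1 3 = 0) (f2_2 : f2 2 = 0) (f2_3 : f2 3 = 0).

Lemma Lambda3_reduced : Lambda3 f1 f2 = - (f1 2 * f2 1).
Proof. rewrite /Lambda3 /Delta f1_1 f2_2; ring. Qed.

Lemma Lambda5_1_reduced : Lambda5_1 f1 f2 = 3%:R * f1 2 ^+ 2 * f2 1.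
Proof. rewrite /Lambda5_1 /Delta f1_1 f1_3 f2_2 f2_3; ring. Qed.

Lemma Lambda7_11_reduced : Lambda7_11 f1 f2 = - (15%:R * f1 2 ^+ 3 * f2 1).
Proof. rewrite /Lambda7_11 /Delta f1_1 f1_3 f2_2 f2_3; ring. Qed.

Lemma M8_reduced : M8 f1 f2 = 3%:R * f1 2 * f1 4 * f2 1 ^+ 2.
Proof. rewrite /M8 /Delta f1_1 f1_3 f2_2 f2_3; ring. Qed.

Lemma jet_combo_reduced Q R :
  jet_combo c Q R f1 f2 = reduced_combo Q R (f1 2) (f1 4) (f2 1).
Proof.
by rewrite /jet_combo Lambda3_reduced Lambda5_1_reduced Lambda7_11_reduced M8_reduced.
Qed.

End ReducedJets.
Arguments reduced_eval {F S}.
Arguments reduced_combo {F S}.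

Lemma reduced_eval_eq0 {F : comNzRingType} {S : numDomainType} {c : F -> S}
    {Q R : {poly {poly {poly F}}}} {a b p : S} :
  a != 0 -> p != 0 ->
  reduced_combo c Q R a b p = 0 -> reduced_combo c Q R (- a) (- b) (- p) = 0 ->
  reduced_eval c Q a b p = 0 /\ reduced_eval c R a b p = 0.
Proof.
move=> a0 p0; rewrite /reduced_combo !reduced_eval_opp sqrrN.
set q := reduced_eval c Q a b p; set r := reduced_eval c R a b p.
set w := 3%:R * a ^+ 2 * p; rewrite mulrN -/w => h1 h2.
have w0 : w != 0 by rewrite !mulf_neq0 ?expf_neq0 ?pnatr_eq0.
have e : w * r *+ 2 = (q + w * r) - (q + - w * r) by ring.
move: e; rewrite h1 h2 subr0 => /eqP; rewrite mulrn_eq0 /= mulf_eq0 (negPf w0) /=.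
move=> /eqP r0; split=> //; move: h1; by rewrite r0 mulr0 addr0.
Qed.

Lemma poly_eq0_off0 {R : numDomainType} {p : {poly R}} :
  (forall x, x != 0 -> p.[x] = 0) -> p = 0.
Proof.
move=> p_off0; pose rs := [seq i.+1%:R : R | i <- iota 0 (size p)].
apply: (@roots_geq_poly_eq0 _ p rs); last by rewrite size_map size_iota.
  by apply/allP => _ /mapP[i _ ->]; apply/rootP/p_off0; rewrite pnatr_eq0.
by rewrite map_inj_uniq ?iota_uniq // => i j /eqP; rewrite eqr_nat => /eqP[].
Qed.

Lemma poly3_eq0_off0 (R : numDomainType) (Q : {poly {poly {poly R}}}) :
  (forall x y z, x != 0 -> y != 0 -> eval3 id Q x y z = 0) -> Q = 0.
Proof.
rewrite /eval3 => Q_off0; apply/polyP => i; rewrite coef0.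
have coef_i y z : y != 0 -> (map_poly (fun r => (map_poly id r).[z]) Q`_i).[y] = 0.
  move=> y0; have := congr1 (fun P : {poly R} => P`_i)
    (poly_eq0_off0 (fun x x0 => Q_off0 x y z x0 y0)).
  by rewrite /= coef0 coef_map_id0 // map_poly0 horner0.
apply/polyP => j; rewrite coef0.
have coef_ij z : (map_poly id Q`_i`_j).[z] = 0.
  have := congr1 (fun P : {poly R} => P`_j) (poly_eq0_off0 (coef_i ^~ z)).
  by rewrite /= coef0 coef_map_id0 // map_poly0 horner0.
apply: poly_eq0_off0 => z _; by rewrite -(coef_ij z) map_poly_id.
Qed.

Lemma reduced_point_exists {F : numClosedFieldType} (x y z : F) :
  x != 0 -> y != 0 ->
  exists a b p : F, [/\ a != 0, p != 0, - (a * p) = x, - (15%:R * a ^+ 3 * p) = y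
                     & 3%:R * a * b * p ^+ 2 = z].
Proof.
move=> x0 y0; have n15x : 15%:R * x != 0 by rewrite mulf_neq0 ?pnatr_eq0.
pose a := sqrtC (y / (15%:R * x)); have a2 : a ^+ 2 = y / (15%:R * x) := sqrtCK _.
have : a ^+ 2 != 0 by rewrite a2 mulf_neq0 ?invr_eq0.
rewrite expf_eq0 /= => a0.
pose p := - (x / a); have p0 : p != 0 by rewrite oppr_eq0 mulf_neq0 ?invr_eq0.
have n3 : 3%:R != 0 :> F by rewrite pnatr_eq0.
exists a, (z / (3%:R * a * p ^+ 2)), p; split=> //.
- by rewrite /p; field.
- have -> : - (15%:R * a ^+ 3 * p) = 15%:R * x * a ^+ 2 by rewrite /p; field.
  by rewrite a2; field.
- by field; rewrite a0 andbT oppr_eq0 mulf_neq0 ?invr_eq0.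
Qed.

(* The tower F, F[X], F[X][X], ...: tower 7 is (convertible to) P7 F, the
   outermost variable of tower n.+1 being X_(7-n) of P7. *)
Section PolynomialTower.
Variable F : comNzRingType.

Fixpoint tower (n : nat) : comNzRingType :=
  if n is m.+1 then {poly tower m} : comNzRingType else F.

Fixpoint tconst (n : nat) : F -> tower n :=
  match n return F -> tower n with
  | 0 => id
  | m.+1 => fun a => (tconst m a)%:P
  end.

Variable v : nat -> F.

Fixpoint teval (n : nat) : tower n -> F :=
  match n return tower n -> F with
  | 0 => id
  | m.+1 => fun P => teval m P.[tconst m (v m)]
  end.

Fact teval_is_nmod_morphism n : nmod_morphism (teval n).
Proof.
elim: n => [|n [IH0 IHD]] //=; split=> [|P Q]; first by rewrite horner0 IH0.
by rewrite hornerD IHD.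
Qed.

Fact teval_is_monoid_morphism n : monoid_morphism (teval n).
Proof.
elim: n => [|n [IH1 IHM]] //=; split=> [|P Q]; first by rewrite hornerC IH1.
by rewrite hornerM IHM.
Qed.

HB.instance Definition _ n :=
  GRing.isNmodMorphism.Build (tower n) F (teval n) (teval_is_nmod_morphism n).
HB.instance Definition _ n :=
  GRing.isMonoidMorphism.Build (tower n) F (teval n) (teval_is_monoid_morphism n).

Lemma teval_const n a : teval n (tconst n a) = a.
Proof. by elim: n => //= n IH; rewrite hornerC. Qed.

Lemma tevalC n (P : tower n) : teval n.+1 P%:P = teval n P.
Proof. by rewrite /= hornerC. Qed.

Lemma tevalX n : teval n.+1 'X = v n.
Proof. by rewrite /= hornerX teval_const. Qed.

End PolynomialTower.
Arguments teval {F} v n.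
Arguments tevalC {F} v n.
Arguments tevalX {F} v n.
(* Keep teval folded when simplifying the substituted jets. *)
Arguments teval : simpl never.

Lemma combo_in_tower (F : comNzRingType) (Q R : {poly {poly {poly F}}}) :
  combo Q R = 0 -> jet_combo (S := tower F 7) (@cst7 F) Q R (f1sub F) (f2sub F) = 0.
Proof. by []. Qed.

Section JetEvaluation.
Variables (F : comNzRingType) (v : nat -> F).

Lemma teval_cst7 c : teval v 7 (@cst7 F c) = c.
Proof. by rewrite /cst7 !tevalC. Qed.

Lemma teval_f1sub : [/\ teval v 7 (f1sub F 1) = 0, teval v 7 (f1sub F 2) = v 5,
  teval v 7 (f1sub F 3) = v 3 & teval v 7 (f1sub F 4) = v 1].
Proof.
split; first exact: rmorph0.
- by rewrite /= /X2 tevalC tevalX.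
- by rewrite /= /X4 !tevalC tevalX.
- by rewrite /= /X6 !tevalC tevalX.
Qed.

Lemma teval_f2sub : [/\ teval v 7 (f2sub F 1) = v 6, teval v 7 (f2sub F 2) = v 4,
  teval v 7 (f2sub F 3) = v 2 & teval v 7 (f2sub F 4) = v 0].
Proof.
split; first exact: tevalX.
- by rewrite /= /X3 !tevalC tevalX.
- by rewrite /= /X5 !tevalC tevalX.
- by rewrite /= /X7 !tevalC tevalX.
Qed.

End JetEvaluation.

Lemma combo_eval {F : comNzRingType} {Q R : {poly {poly {poly F}}}} :
  combo Q R = 0 -> forall a b p : F, reduced_combo id Q R a b p = 0.
Proof.
move=> H a b p; pose v := nth 0 [:: 0; b; 0; 0; 0; a; p].
pose g1 := nth 0 [:: 0; 0; a; 0; b]; pose g2 := nth 0 [:: 0; p].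
move/combo_in_tower/(congr1 (teval v 7)): H; rewrite rmorph0 jet_combo_rmorph.
rewrite (@jet_combo_ext F F _ id _ g1 _ g2 Q R (teval_cst7 _ v) (teval_f1sub _ v)
  (teval_f2sub _ v)).
by rewrite jet_combo_reduced.
Qed.

Lemma combo0 (F : comNzRingType) : combo (0 : {poly {poly {poly F}}}) 0 = 0.
Proof. exact: jet_combo0. Qed.

Theorem mainTheorem10 (F : numClosedFieldType) (Q R : {poly {poly {poly F}}}) :
  combo Q R = 0 <-> (Q = 0 /\ R = 0).
Proof.
split=> [Hcombo | [-> ->]]; last exact: combo0.
have off0 x y z : x != 0 -> y != 0 -> eval3 id Q x y z = 0 /\ eval3 id R x y z = 0.
  move=> x0 y0; have [a [b [p [a0 p0 <- <- <-]]]] := reduced_point_exists x y z x0 y0.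
  exact: reduced_eval_eq0 a0 p0 (combo_eval Hcombo a b p)
    (combo_eval Hcombo (- a) (- b) (- p)).
by split; apply: poly3_eq0_off0 => x y z x0 y0; have [] := off0 x y z x0 y0.
Qed.
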